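(* Let $1\le d<n$, $r=d(n-d)$, and let $t_1,\dots,t_k\in\{1,\dots,r-1\}$. If $\mathfrak C=F_{t_1}F_{t_2}\cdots F_{t_k}(\mathfrak C_{\mathrm{right}})$ is a maximal chain (in particular nonzero), then $\sigma_{\mathfrak C}=s_{t_k}s_{t_{k-1}}\cdots s_{t_1}$, and this is a reduced expression in $\mathsf S_r$.
   Context: $I(d,n)$: $d$-subsets of $\{1,\dots,n\}$ as increasing sequences, ordered by $\underline i\le\underline j$ iff $i_k\le j_k$ for all $k$. Maximal chains $\underline i_r>\cdots>\underline i_0$; chains compared lexicographically via concatenated strings $\underline i_r\cdots\underline i_0$; $\mathfrak C_{\mathrm{right}}$ the smallest. Root operators $f_{s,h}$ ($1\le h\le d$, $h\le s<n-d+h$): $f_{s,h}(i_1\cdots i_d)$ replaces $i_h=s$ by $s+1$ if $i_h=s$ and ($h=d$ or $i_{h+1}\ge s+2$), else $0$. Along a maximal chain $\underline i_t=f_{s_t,h_t}(\underline i_{t-1})$, each admissible pair occurring exactly once; $\tilde f_t:=f_{s_t,h_t}$ for $\mathfrak C_{\mathrm{right}}$; $\sigma_{\mathfrak C}\in\mathsf S_r$ is defined by: the operator from $\underline i_{t-1}$ to $\underline i_t$ in $\mathfrak C$ is $\tilde f_{\sigma_{\mathfrak C}(t)}$. For $1\le t\le r-1$, if the Bruhat interval $[\underline i_{t-1},\underline i_{t+1}]$ has 4 elements $\{\underline i_{t-1},\underline i_t,\underline i'_t,\underline i_{t+1}\}$ and $\underline i'_t>_{lex}\underline i_t$ (right peak),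 $F_t(\mathfrak C)$ is the chain with $\underline i_t$ replaced by $\underline i'_t$; otherwise $F_t(\mathfrak C)=0$, and $F_t(0)=0$. $s_t=(t,t+1)\in\mathsf S_r$. *)

From mathcomp Require Import all_boot.
Set Implicit Arguments. Unset Strict Implicit. Unset Printing Implicit Defensive.

Definition inI (d n : nat) (s : seq nat) : bool :=
  [&& size s == d, sorted ltn s & all (fun x => 0 < x <= n) s].

Fixpoint seqs (d n : nat) : seq (seq nat) :=
  match d with
  | 0 => [:: [::]]
  | d'.+1 => [seq x :: s | x <- iota 1 n, s <- seqs d' n]
  end.

Definition Idn (d n : nat) : seq (seq nat) := [seq s <- seqs d n | inI d n s].

(* Bruhat order: componentwise comparison. *)
Definition leI (a b : seq nat) : bool := all2 leq a b.
Definition ltI (a b : seq nat) : bool := leI a b && (a != b).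

Fixpoint lexle (s t : seq nat) : bool :=
  match s, t with
  | [::], _ => true
  | _ :: _, [::] => false
  | x :: s', y :: t' => (x < y) || ((x == y) && lexle s' t')
  end.
Definition lexlt (s t : seq nat) : bool := lexle s t && (s != t).

(* A chain is represented by the list [:: i_0; i_1; ...; i_r] with
   i_0 < i_1 < ... < i_r, so that nth [::] C t = i_t. *)
Definition is_maxchain (d n : nat) (C : seq (seq nat)) : Prop :=
  [/\ all (inI d n) C, sorted ltI C &
      forall x, inI d n x ->
        (forall y, y \in C -> leI x y || leI y x) -> x \in C].

Definition chain_string (C : seq (seq nat)) : seq nat := flatten (rev C).

Definition is_Cright (d n : nat) (Cr : seq (seq nat)) : Prop :=
  is_maxchain d n Cr /\
  forall C, is_maxchain d n C -> lexle (chain_string Cr) (chain_string C).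

Definition admissible (d n s h : nat) : bool :=
  [&& 0 < h, h <= d, h <= s & s < n - d + h].

(* Root operator f_{s,h} on I(d,n); None stands for 0.  Positions are
   1-based: i_h = nth 0 i h.-1. *)
Definition rootop (d s h : nat) (i : seq nat) : option (seq nat) :=
  if (nth 0 i h.-1 == s) && ((h == d) || (s.+2 <= nth 0 i h))
  then Some (set_nth 0 i h.-1 s.+1) else None.

Definition Fop (d n t : nat) (C : seq (seq nat)) : option (seq (seq nat)) :=
  let a := nth [::] C t.-1 in
  let c := nth [::] C t in
  let b := nth [::] C t.+1 in
  let J := [seq x <- Idn d n | leI a x && leI x b] in
  if [&& size J == 4, a \in J, c \in J & b \in J] then
    match [seq x <- J | x \notin [:: a; c; b]] with
    | [:: c'] => if lexlt c c' then Some (set_nth [::] C t c') else None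
    | _ => None
    end
  else None.

(* F_{t_1} F_{t_2} ... F_{t_k} (C), with F(0) = 0 (F_{t_k} applied first). *)
Definition Fseq (d n : nat) (ts : seq nat) (C : seq (seq nat)) :
  option (seq (seq nat)) :=
  foldr (fun t oC => obind (Fop d n t) oC) (Some C) ts.

Definition stransp (t x : nat) : nat :=
  if x == t then t.+1 else if x == t.+1 then t else x.

(* The permutation s_{t_k} s_{t_{k-1}} ... s_{t_1} (functional composition,
   s_{t_1} applied first) for ts = [:: t_1; ...; t_k]. *)
Definition sprod (ts : seq nat) (x : nat) : nat :=
  foldl (fun y t => stransp t y) x ts.

From mathcomp Require Import all_boot zify.
Set Implicit Arguments. Unset Strict Implicit.

(* Along C_right the entries are pushed to their maxima from the right: first
   i_d up to n, then i_(d-1) up to n-1, and so on.  Hence the position h of the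
   root operator f_(s,h) never increases along C_right, and C_right is the
   lexicographically smallest maximal chain because every step keeps the
   left-most entries as small as possible.  A nonzero F_t replaces a diamond
   a < c < b by a < c' < b with the two root operators exchanged, and
   c' >_lex c forces the operator that moves down to have the smaller h.
   By induction, step t of F_(t_1) ... F_(t_k)(C_right) is performed by the
   operator of step sigma(t) of C_right, where sigma = s_(t_k) ... s_(t_1), and
   each F_(t_i) exchanges two values with sigma(t_i) < sigma(t_i + 1), i.e. adds
   one inversion.  So sigma has k inversions, while a product of m simple
   transpositions has at most m; the word is therefore reduced. *)

Lemma leIP a b :
  reflect (size a = size b /\ forall i, nth 0 a i <= nth 0 b i) (leI a b).
Proof.
apply: (iffP idP) => [|[]].
  elim: a b => [|x a IH] [|y b] //= /andP [le_xy /IH [eq_ab le_ab]].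
  by split=> [|[|i]] //=; rewrite eq_ab.
elim: a b => [|x a IH] [|y b] //= /eqP; rewrite eqSS => /eqP eq_ab le_ab.
by rewrite (le_ab 0) IH // => i; apply: (le_ab i.+1).
Qed.

Lemma leI_refl : reflexive leI.
Proof. by move=> a; apply/leIP. Qed.

Lemma leI_trans : transitive leI.
Proof.
move=> b a c /leIP [eq_ab le_ab] /leIP [eq_bc le_bc].
by apply/leIP; split=> [|i]; [rewrite eq_ab | apply: leq_trans (le_ab i) (le_bc i)].
Qed.

Lemma leI_anti a b : leI a b -> leI b a -> a = b.
Proof.
move=> /leIP [eq_ab le_ab] /leIP [_ le_ba]; apply: (eq_from_nth (x0 := 0)) => // i _.
by apply/eqP; rewrite eqn_leq le_ab le_ba.
Qed.

Lemma ltI_trans : transitive ltI.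
Proof.
move=> b a c /andP [le_ab ne_ab] /andP [le_bc ne_bc].
rewrite /ltI (leI_trans le_ab le_bc); apply: contraNN ne_ab => /eqP eq_ac.
by rewrite eq_ac in le_ab *; rewrite (leI_anti le_bc le_ab).
Qed.

Lemma inIP d n x :
  reflect [/\ size x = d, forall p, p.+1 < d -> nth 0 x p < nth 0 x p.+1
            & forall p, p < d -> 0 < nth 0 x p <= n] (inI d n x).
Proof.
apply: (iffP and3P) => [[/eqP sx /(sortedP 0) lt_x /(all_nthP 0) rng_x]|[sx lt_x rng_x]].
  by split=> // p lt_p; [apply: lt_x | apply: rng_x]; rewrite sx.
by split; [apply/eqP | apply/(sortedP 0) | apply/(all_nthP 0)] => // p;
  rewrite sx; [apply: lt_x | apply: rng_x].
Qed.

Lemma inI_size d n x : inI d n x -> size x = d.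
Proof. by case/inIP. Qed.

Lemma inI_gap d n x p q :
  inI d n x -> p <= q -> q < d -> nth 0 x p + (q - p) <= nth 0 x q.
Proof.
case/inIP=> _ lt_x _; elim: q => [|q IH]; first by rewrite leqn0 => /eqP ->; rewrite addn0.
rewrite leq_eqVlt => /orP [/eqP <-|le_pq lt_qd]; first by rewrite subnn addn0.
by have := IH le_pq (ltnW lt_qd); have := lt_x q lt_qd; lia.
Qed.

Lemma inI_nth_gt d n x p : inI d n x -> p < d -> p < nth 0 x p.
Proof.
move=> Ix lt_pd; have := inI_gap Ix (leq0n p) lt_pd.
by case/inIP: Ix => _ _ /(_ 0 (leq_ltn_trans (leq0n p) lt_pd)); lia.
Qed.

Lemma inI_nth_le d n x p : inI d n x -> p < d -> nth 0 x p + (d - p.+1) <= n.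
Proof.
move=> Ix lt_pd; have lt_last : d.-1 < d by lia.
have := inI_gap Ix (_ : p <= d.-1) lt_last.
by case/inIP: Ix => _ _ /(_ _ lt_last); lia.
Qed.

Lemma size_incr_nth_max a i : size (incr_nth a i) = maxn i.+1 (size a).
Proof. by rewrite size_incr_nth; case: ltnP => ?; lia. Qed.

Lemma set_nth_succ a i : set_nth 0 a i (nth 0 a i).+1 = incr_nth a i.
Proof.
apply: (eq_from_nth (x0 := 0)) => [|j _].
  by rewrite size_set_nth size_incr_nth_max.
rewrite nth_set_nth nth_incr_nth /=.
by case: (eqVneq j i) => [->|ne_ji]; rewrite ?eqxx // eq_sym (negbTE ne_ji).
Qed.

Lemma ltI_incr_nth a i : i < size a -> ltI a (incr_nth a i).
Proof.
move=> lt_ia; apply/andP; split.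
  by apply/leIP; split=> [|j]; rewrite ?size_incr_nth ?lt_ia ?nth_incr_nth ?leq_addl.
by apply/eqP => /(congr1 (nth 0 ^~ i)) /=; rewrite nth_incr_nth eqxx; lia.
Qed.

Lemma interval_incr_nth a i x :
  leI a x -> leI x (incr_nth a i) -> x = a \/ x = incr_nth a i.
Proof.
move=> /leIP [s_ax le_ax] /leIP [s_xb le_xb].
have [eq_xi|ne_xi] := eqVneq (nth 0 x i) (nth 0 a i); [left | right];
  apply: (eq_from_nth (x0 := 0)) => // j _;
  have := le_ax j; have := le_xb j; rewrite nth_incr_nth;
  case: eqVneq => [<-|]; lia.
Qed.

Lemma interval_incr_nth2 a p q x : leI a x -> leI x (incr_nth (incr_nth a p) q) ->
  x \in [:: a; incr_nth a p; incr_nth a q; incr_nth (incr_nth a p) q].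
Proof.
move=> le_ax le_xb; have /leIP [s_ax le_ax_nth] := le_ax; have /leIP [s_xb le_xb_nth] := le_xb.
have [lt_p|le_p] := ltnP (nth 0 a p) (nth 0 x p).
  have le_pax : leI (incr_nth a p) x.
    apply/leIP; split=> [|j]; first by move: s_xb; rewrite !size_incr_nth_max; lia.
    by rewrite nth_incr_nth; have := le_ax_nth j; case: eqVneq => [<-|]; lia.
  by case: (interval_incr_nth le_pax le_xb) => ->; rewrite !inE eqxx ?orbT.
have le_xqa : leI x (incr_nth a q).
  apply/leIP; split=> [|j]; first by move: s_xb; rewrite !size_incr_nth_max; lia.
  have := le_xb_nth j; rewrite !nth_incr_nth; case: (eqVneq p j) => [<-|]; lia.
by case: (interval_incr_nth le_ax le_xqa) => ->; rewrite !inE eqxx ?orbT.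
Qed.

Lemma rootopE d s h a :
  rootop d s h a =
  if (nth 0 a h.-1 == s) && ((h == d) || (s.+2 <= nth 0 a h))
  then Some (incr_nth a h.-1) else None.
Proof. by rewrite /rootop -set_nth_succ; case: ifP => // /andP [/eqP ->]. Qed.

Lemma rootop_Some d s h a b :
  rootop d s h a = Some b -> b = incr_nth a h.-1 /\ nth 0 a h.-1 = s.
Proof. by rewrite rootopE; case: ifP => // /andP [/eqP -> _] [<-]. Qed.

Lemma rootop_inI d n s h a : 0 < h <= d -> nth 0 a h.-1 = s ->
  inI d n (incr_nth a h.-1) -> rootop d s h a = Some (incr_nth a h.-1).
Proof.
move=> /andP [h_gt0 le_hd] a_h /inIP [_ lt_b _]; rewrite rootopE a_h eqxx /=.
have [//|ne_hd] := eqVneq h d; have lt_hd : h < d by lia.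
suff -> : s.+1 < nth 0 a h by [].
have := lt_b h.-1; rewrite prednK // !nth_incr_nth eqxx a_h => /(_ lt_hd).
by case: eqVneq => [|_] /=; lia.
Qed.

Lemma lexle_refl : reflexive lexle.
Proof. by elim=> //= x s ->; rewrite eqxx orbT. Qed.

Lemma lexle_anti s t : lexle s t -> lexle t s -> s = t.
Proof.
elim: s t => [|x s IH] [|y t] //=.
case/orP=> [lt_xy|/andP [/eqP eq_xy le_st]] /orP [lt_yx|/andP [/eqP eq_yx le_ts]]; try lia.
by rewrite eq_xy (IH t).
Qed.

Lemma lexle_catl a u v : lexle (a ++ u) (a ++ v) = lexle u v.
Proof. by elim: a => //= x a ->; rewrite ltnn eqxx. Qed.

Lemma lexle_nth i s t : (forall p, p < i -> nth 0 s p = nth 0 t p) ->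
  nth 0 s i < nth 0 t i -> lexle s t.
Proof.
elim: i s t => [|i IH] [|x s] [|y t] //= eq_st lt_i; first by rewrite lt_i.
have /= -> := eq_st 0 isT; rewrite ltnn eqxx /=.
by apply: IH => // p lt_p; apply: (eq_st p.+1).
Qed.

Lemma lexle_incr_nth a p q : lexle (incr_nth a p) (incr_nth a q) -> p != q -> q < p.
Proof.
move=> le_pq ne_pq; have [lt_pq|//|eq_pq] := ltngtP p q; last by rewrite eq_pq eqxx in ne_pq.
case/eqP: ne_pq; apply: (@incr_nth_inj a).
apply: lexle_anti le_pq (lexle_nth (i := p) _ _) => [i lt_ip|].
  by rewrite !nth_incr_nth (gtn_eqF lt_ip) (gtn_eqF (ltn_trans lt_ip lt_pq)).
by rewrite !nth_incr_nth eqxx (gtn_eqF lt_pq).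
Qed.

Lemma flatten_inj_sized (T : Type) k (s t : seq (seq T)) : 0 < k ->
  all (fun x => size x == k) s -> all (fun x => size x == k) t ->
  flatten s = flatten t -> s = t.
Proof.
have shapeE u : all (fun x => size x == k) u -> shape u = nseq (size u) k.
  by move=> u_k; rewrite -(size_map size u); apply/all_pred1P; rewrite all_map.
move=> k_gt0 /shapeE sh_s /shapeE sh_t eq_st.
have eq_size : size s = size t.
  by apply/eqP; rewrite -(eqn_pmul2l k_gt0) -!sumn_nseq -sh_s -sh_t -!size_flatten eq_st.
by rewrite -[s]flattenK -[t]flattenK sh_s sh_t eq_size eq_st.
Qed.

Lemma Fop_Some d n t C C' : Fop d n t C = Some C' ->
  exists c', [/\ C' = set_nth [::] C t c', inI d n c',
    leI (nth [::] C t.-1) c' && leI c' (nth [::] C t.+1),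
    c' \notin [:: nth [::] C t.-1; nth [::] C t; nth [::] C t.+1] & lexle (nth [::] C t) c'].
Proof.
rewrite /Fop; case: ifP => // _.
case E: (filter _ _) => [|c' [|]] //; case: ifP => // /andP [lex_c _] [<-].
have : c' \in c' :: [::] by rewrite mem_head.
rewrite -E !mem_filter => /andP [nin /andP [le_abc /andP [Ic' _]]].
by exists c'.
Qed.

Lemma Fop_swap d n t C C' s1 h1 s2 h2 : 0 < h1 <= d -> 0 < h2 <= d ->
  inI d n (nth [::] C t.+1) ->
  rootop d s1 h1 (nth [::] C t.-1) = Some (nth [::] C t) ->
  rootop d s2 h2 (nth [::] C t) = Some (nth [::] C t.+1) ->
  Fop d n t C = Some C' ->
  h2 < h1 /\ exists c', [/\ C' = set_nth [::] C t c', inI d n c',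
    rootop d s2 h2 (nth [::] C t.-1) = Some c' & rootop d s1 h1 c' = Some (nth [::] C t.+1)].
Proof.
move=> h1_rng h2_rng Ib R1 R2 /Fop_Some [c' [-> Ic' /andP [le_ac le_cb] nin lex_cc]].
(* The interval [a, b] is {a, c, incr_nth a q, b}, so c' = incr_nth a q. *)
set a := nth [::] C t.-1 in R1 le_ac nin *.
have [c_def a_p] := rootop_Some R1; have [b_def c_q] := rootop_Some R2.
rewrite b_def c_def in Ib le_cb nin lex_cc *; rewrite c_def in c_q.
set p := h1.-1 in a_p c_def b_def Ib le_cb nin lex_cc c_q *.
set q := h2.-1 in c_q b_def Ib le_cb nin *.
move: Ic' nin lex_cc; have := interval_incr_nth2 le_ac le_cb; rewrite !inE.
case/or4P=> /eqP ->; rewrite ?eqxx ?orbT // => Iaq nin lex_pq.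
have ne_pq : p != q by apply: contraNneq nin => ->; rewrite eqxx orbT.
have lt_qp := lexle_incr_nth lex_pq ne_pq.
split; first by move: lt_qp; rewrite /p /q; lia.
exists (incr_nth a q); split=> //.
  by apply: (rootop_inI h2_rng _ Iaq); rewrite -c_q nth_incr_nth (negbTE ne_pq).
rewrite [incr_nth (incr_nth a p) q]incr_nthC in Ib *.
by apply: (rootop_inI h1_rng _ Ib); rewrite nth_incr_nth eq_sym (negbTE ne_pq).
Qed.

Section MaximalChains.
Variables d n : nat.
Variable M : seq (seq nat).
Hypothesis maxM : is_maxchain d n M.

Lemma maxchain_inI i : i < size M -> inI d n (nth [::] M i).
Proof. by case: maxM => allM _ _; apply: (all_nthP [::] allM). Qed.

Lemma maxchain_ltI i j : i < j -> j < size M -> ltI (nth [::] M i) (nth [::] M j).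
Proof.
case: maxM => _ sortM _ lt_ij lt_jM.
by apply: (sorted_ltn_nth ltI_trans [::] sortM); rewrite ?inE // (ltn_trans lt_ij).
Qed.

Lemma maxchain_leI i j : i <= j -> j < size M -> leI (nth [::] M i) (nth [::] M j).
Proof.
rewrite leq_eqVlt => /orP [/eqP ->|lt_ij] lt_jM; first exact: leI_refl.
by case/andP: (maxchain_ltI lt_ij lt_jM).
Qed.

Lemma maxchain_mem x : inI d n x ->
  (forall i, i < size M -> leI x (nth [::] M i) || leI (nth [::] M i) x) ->
  exists2 i, i < size M & nth [::] M i = x.
Proof.
case: maxM => _ _ maximal Ix cmp_x.
have /maximal xM : forall y, y \in M -> leI x y || leI y x.
  by move=> y yM; rewrite -(nth_index [::] yM) cmp_x ?index_mem.
by exists (index x M); rewrite ?index_mem ?nth_index ?xM.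
Qed.

Lemma maxchain_between i x : 0 < i < size M -> inI d n x ->
  leI (nth [::] M i.-1) x -> leI x (nth [::] M i) -> x = nth [::] M i.-1 \/ x = nth [::] M i.
Proof.
case/andP=> i_gt0 lt_iM Ix le_x le_x'.
have [k lt_kM Mk] : exists2 k, k < size M & nth [::] M k = x.
  apply: maxchain_mem => // k lt_kM; case: (ltnP k i) => [lt_ki|le_ik].
    by rewrite (leI_trans (maxchain_leI _ _) le_x) ?orbT //; lia.
  by rewrite (leI_trans le_x' (maxchain_leI le_ik lt_kM)).
subst x; case: (ltnP k i) => [lt_ki|le_ik]; [left | right]; apply: leI_anti => //.
- by apply: maxchain_leI; lia.
- exact: maxchain_leI.
Qed.

Lemma maxchain_head z : inI d n z -> (forall x, inI d n x -> leI z x) ->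
  0 < size M /\ nth [::] M 0 = z.
Proof.
move=> Iz z_min; have [k lt_kM Mk] : exists2 k, k < size M & nth [::] M k = z.
  by apply: maxchain_mem => // k lt_kM; rewrite z_min ?maxchain_inI.
have M_gt0 : 0 < size M by lia.
split=> //; apply: leI_anti; last by rewrite z_min ?maxchain_inI.
by rewrite -Mk maxchain_leI.
Qed.

Lemma maxchain_last z : inI d n z -> (forall x, inI d n x -> leI x z) ->
  nth [::] M (size M).-1 = z.
Proof.
move=> Iz z_max; have [k lt_kM Mk] : exists2 k, k < size M & nth [::] M k = z.
  by apply: maxchain_mem => // k lt_kM; rewrite z_max ?maxchain_inI ?orbT.
have lt_lastM : (size M).-1 < size M by lia.
apply: leI_anti; first by rewrite z_max ?maxchain_inI.
by rewrite -Mk maxchain_leI //; lia.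
Qed.

End MaximalChains.

Lemma divn_modn_succ j N : 0 < N ->
  j.+1 %/ N = (j %/ N) + ((j %% N).+1 == N) /\
  j.+1 %% N = if (j %% N).+1 == N then 0 else (j %% N).+1.
Proof.
move=> N_gt0; have := divn_eq j N; have := divn_eq j.+1 N; have := ltn_pmod j N_gt0.
have := ltn_pmod j.+1 N_gt0; rewrite !modnS !divnS //.
by case: (N %| j.+1) => /=; rewrite ?mulSn; case: eqP; lia.
Qed.

Section RightChain.
Variables d n : nat.
Hypotheses (d_gt0 : 0 < d) (d_lt_n : d < n).
Local Notation N := (n - d).
Local Notation r := (d * (n - d)).

(* After j = m * N + k steps (k < N), C_right has pushed the last m entries to
   their maxima and moved the (m+1)-st entry from the right by k; cshift e m k
   is then the displacement of the entry with e entries to its right. *)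
Definition cshift (e m k : nat) : nat := if e < m then N else if e == m then k else 0.

Definition cright (j : nat) : seq nat :=
  mkseq (fun p => p.+1 + cshift (d - p.+1) (j %/ N) (j %% N)) d.

Let N_gt0 : 0 < N.
Proof. by rewrite subn_gt0. Qed.

Let divN_lt j : j < r -> j %/ N < d.
Proof. by move=> lt_jr; rewrite ltn_divLR. Qed.

Lemma size_cright j : size (cright j) = d.
Proof. exact: size_mkseq. Qed.

Lemma nth_cright j p : p < d ->
  nth 0 (cright j) p = p.+1 + cshift (d - p.+1) (j %/ N) (j %% N).
Proof. exact: nth_mkseq. Qed.

Lemma cshift_le e m k : k < N -> cshift e m k <= N.
Proof. by rewrite /cshift; case: (ltngtP e m) => // _ /ltnW. Qed.

Lemma leq_cshift e e' m k : k < N -> e' <= e -> cshift e m k <= cshift e' m k.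
Proof.
move=> lt_kN le_e; rewrite /cshift.
by case: (ltngtP e m) => ?; case: (ltngtP e' m) => ? /=; lia.
Qed.

Lemma cshiftS e m k : cshift e m k.+1 = (e == m) + cshift e m k.
Proof. by rewrite /cshift; case: (ltngtP e m). Qed.

Lemma cshift_carry e m : cshift e m N = cshift e m.+1 0.
Proof. by rewrite /cshift ltnS if_same; case: (ltngtP e m). Qed.

Lemma cright_inI j : inI d n (cright j).
Proof.
have lt_kN := ltn_pmod j N_gt0.
apply/inIP; split=> [|p lt_pd|p lt_pd]; first exact: size_cright.
  rewrite (nth_cright _ lt_pd) (nth_cright _ (ltnW lt_pd)).
  by have := leq_cshift (j %/ N) lt_kN (_ : d - p.+2 <= d - p.+1); lia.
by rewrite nth_cright //; have := cshift_le (d - p.+1) (j %/ N) lt_kN; lia.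
Qed.

Lemma cshift_succ j e :
  cshift e (j.+1 %/ N) (j.+1 %% N) = (e == j %/ N) + cshift e (j %/ N) (j %% N).
Proof.
have [-> ->] := divn_modn_succ j N_gt0; rewrite -cshiftS.
by case: eqP => [->|_]; rewrite ?addn0 // addn1 cshift_carry.
Qed.

Lemma nth_cright_low j p : p < d.-1 - j %/ N -> nth 0 (cright j) p = p.+1.
Proof.
move=> lt_p; rewrite nth_cright; last by move: (j %/ N) lt_p => m; lia.
by rewrite /cshift; case: ltngtP; move: (j %/ N) lt_p => m; lia.
Qed.

Lemma cright_succ j : j < r -> cright j.+1 = incr_nth (cright j) (d.-1 - j %/ N).
Proof.
move=> lt_jr; have lt_md := divN_lt lt_jr.
apply: (eq_from_nth (x0 := 0)) => [|p _].
  by rewrite size_incr_nth_max !size_cright; move: (j %/ N) => m; lia.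
rewrite nth_incr_nth; case: (ltnP p d) => [lt_pd|le_dp]; last first.
  rewrite !nth_default ?size_cright //; case: eqP => // eq_p.
  by move: le_dp; rewrite -eq_p; move: (j %/ N) => m; lia.
rewrite !nth_cright // cshift_succ addnCA; congr (_ + (_ + _)).
by apply/eqP/eqP; move: (j %/ N) lt_md => m; lia.
Qed.

Lemma cright_step j : j < r ->
  admissible d n (d - j %/ N + j %% N) (d - j %/ N) /\
  rootop d (d - j %/ N + j %% N) (d - j %/ N) (cright j) = Some (cright j.+1).
Proof.
move=> lt_jr; have lt_md := divN_lt lt_jr.
have lt_kN := ltn_pmod j N_gt0.
have pos_h : (d - j %/ N).-1 = d.-1 - j %/ N by move: (j %/ N) lt_md => m; lia.
split; first by rewrite /admissible; move: (j %/ N) (j %% N) lt_md lt_kN => m k; lia.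
rewrite cright_succ // -pos_h; apply: (rootop_inI (n := n)).
- by move: (j %/ N) lt_md => m; lia.
- have e_m : d - (d.-1 - j %/ N).+1 = j %/ N by move: (j %/ N) lt_md => m; lia.
  rewrite pos_h nth_cright ?e_m /cshift ?ltnn ?eqxx; move: (j %/ N) lt_md => m; lia.
- by rewrite pos_h -cright_succ ?cright_inI.
Qed.

Lemma cright_step_label j s h : 0 < j <= r -> admissible d n s h ->
  rootop d s h (cright j.-1) = Some (cright j) -> h = d - j.-1 %/ N.
Proof.
case/andP=> j_gt0 le_jr /and4P [h_gt0 _ _ _] /rootop_Some [step _].
have lt_jr : j.-1 < r by rewrite prednK.
move: step; rewrite -{1}(prednK j_gt0) cright_succ // => /incr_nth_inj.
by move: (j.-1 %/ N) (divN_lt lt_jr) => m; lia.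
Qed.

Lemma cright0_le x : inI d n x -> leI (cright 0) x.
Proof.
move=> Ix; apply/leIP; split=> [|p]; first by rewrite size_cright (inI_size Ix).
case: (ltnP p d) => [lt_pd|le_dp]; last by rewrite nth_default ?size_cright.
by rewrite nth_cright // div0n mod0n /cshift ltn0 if_same addn0 (inI_nth_gt Ix).
Qed.

Lemma le_cright_top x : inI d n x -> leI x (cright r).
Proof.
move=> Ix; apply/leIP; split=> [|p]; first by rewrite size_cright (inI_size Ix).
case: (ltnP p d) => [lt_pd|le_dp]; last by rewrite nth_default ?(inI_size Ix).
rewrite nth_cright // mulnK ?N_gt0 // /cshift ifT; last by lia.
by have := inI_nth_le Ix lt_pd; lia.
Qed.

Definition cright_chain : seq (seq nat) := mkseq cright r.+1.

Lemma size_cright_chain : size cright_chain = r.+1.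
Proof. exact: size_mkseq. Qed.

Lemma nth_cright_chain j : j <= r -> nth [::] cright_chain j = cright j.
Proof. by move=> le_jr; rewrite nth_mkseq. Qed.

Lemma cright_chain_maxchain : is_maxchain d n cright_chain.
Proof.
split.
- by apply/allP => _ /mapP [j _ ->]; apply: cright_inI.
- apply/(sortedP [::]) => j; rewrite size_cright_chain ltnS => lt_jr.
  rewrite (nth_cright_chain (ltnW lt_jr)) (nth_cright_chain lt_jr) cright_succ //.
  by apply: ltI_incr_nth; rewrite size_cright; move: (j %/ N) => m; lia.
move=> x Ix cmp_x.
have mem_cright j : j <= r -> cright j \in cright_chain.
  by move=> le_jr; rewrite -nth_cright_chain // mem_nth // size_cright_chain.
pose below j := (j <= r) && leI (cright j) x.
have ex_below : exists j, below j by exists 0; rewrite /below leq0n cright0_le.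
have below_r j : below j -> j <= r by case/andP.
have [j /andP [le_jr le_jx] j_max] := ex_maxnP ex_below below_r.
have [lt_jr|le_rj] := ltnP j r; last first.
  by rewrite (@leI_anti x (cright j)) ?mem_cright // (_ : j = r) ?le_cright_top //; lia.
have [le_x|le_x] := orP (cmp_x _ (mem_cright _ lt_jr)); last first.
  by have := j_max j.+1; rewrite /below lt_jr le_x ltnn => /(_ isT).
by rewrite cright_succ // in le_x; case: (interval_incr_nth le_jx le_x) => ->;
  rewrite -?cright_succ ?mem_cright // ltnW.
Qed.

Lemma maxchain_pred_cright M i j : is_maxchain d n M -> 0 < i < size M -> j < r ->
  nth [::] M i = cright j.+1 ->
  nth [::] M i.-1 = cright j \/
  forall u v, lexle (cright j ++ u) (nth [::] M i.-1 ++ v).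
Proof.
move=> maxM /andP [i_gt0 lt_iM] lt_jr Mi.
have lt_md := divN_lt lt_jr.
set y := nth [::] M i.-1; set q := d.-1 - j %/ N.
have lt_qd : q < d by rewrite /q; move: (j %/ N) => m; lia.
have Iy : inI d n y by apply: (maxchain_inI maxM); lia.
have /leIP [_ le_yz] : leI y (incr_nth (cright j) q).
  by rewrite -cright_succ // -Mi; apply: (maxchain_leI maxM); lia.
have [->|ne_y] := eqVneq y (cright j); [by left | right => u v].
apply: (@lexle_nth q) => [p lt_pq|]; rewrite !nth_cat size_cright (inI_size Iy).
  have lt_pd := ltn_trans lt_pq lt_qd; rewrite lt_pd.
  have := le_yz p; have := inI_nth_gt Iy lt_pd.
  by rewrite nth_incr_nth (gtn_eqF lt_pq) nth_cright_low //; lia.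
rewrite lt_qd ltnNge; apply/negP => le_yq.
have le_y : leI y (cright j).
  apply/leIP; split=> [|p]; first by rewrite size_cright (inI_size Iy).
  by have := le_yz p; rewrite nth_incr_nth; case: eqP => [<-|_] /=; lia.
have /andP [le_cz ne_cz] : ltI (cright j) (incr_nth (cright j) q).
  by apply: ltI_incr_nth; rewrite size_cright.
rewrite -cright_succ // -Mi in le_cz ne_cz.
have i_rng : 0 < i < size M by rewrite i_gt0.
case: (maxchain_between maxM i_rng (cright_inI j) le_y le_cz) => eq_c.
- by rewrite eq_c eqxx in ne_y.
- by rewrite eq_c eqxx in ne_cz.
Qed.

Lemma cright_lexmin_prefix M j : is_maxchain d n M -> j <= r ->
  forall i, i < size M -> nth [::] M i = cright j ->
  lexle (flatten (rev (mkseq cright j.+1))) (flatten (rev (take i.+1 M))).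
Proof.
move=> maxM; have [M_gt0 M0] := maxchain_head maxM (cright_inI 0) (@cright0_le).
elim: j => [|j IH] le_jr [|i] lt_iM Mi.
- by rewrite (take_nth [::]) // take0 M0 /= lexle_refl.
- have /andP [_] := maxchain_ltI maxM (ltn0Sn i) lt_iM.
  by rewrite M0 Mi eqxx.
- have lt_j : j.+1 < size cright_chain by rewrite size_cright_chain.
  have /andP [_] := maxchain_ltI cright_chain_maxchain (ltn0Sn j) lt_j.
  by rewrite !nth_cright_chain // -M0 Mi eqxx.
rewrite mkseqS (take_nth [::]) // !rev_rcons /= Mi lexle_catl.
have i_rng : 0 < i.+1 < size M by [].
case: (maxchain_pred_cright maxM i_rng le_jr Mi) => /= [Mi'|lex_i].
  by apply: IH => //; [apply: ltnW | apply: ltnW].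
by rewrite mkseqS (take_nth [::]) ?rev_rcons 1?ltnW //=; apply: lex_i.
Qed.

Lemma cright_lexmin M : is_maxchain d n M ->
  lexle (chain_string cright_chain) (chain_string M).
Proof.
move=> maxM; have [M_gt0 _] := maxchain_head maxM (cright_inI 0) (@cright0_le).
have /(_ (size M).-1) := cright_lexmin_prefix maxM (leqnn r).
rewrite (prednK M_gt0) take_size; apply=> //.
exact (maxchain_last maxM (cright_inI r) (@le_cright_top)).
Qed.

Lemma Cright_eq Cr : is_Cright d n Cr -> Cr = cright_chain.
Proof.
case=> maxCr Cr_min.
have := lexle_anti (Cr_min _ cright_chain_maxchain) (cright_lexmin maxCr).
have sized C : is_maxchain d n C -> all (fun x => size x == d) (rev C).
  by case=> allC _ _; rewrite all_rev; apply: sub_all allC => x /inI_size ->.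
move/(flatten_inj_sized d_gt0 (sized _ maxCr) (sized _ cright_chain_maxchain)).
by move/(congr1 rev); rewrite !revK.
Qed.

End RightChain.

Definition inversions (r : nat) (f : nat -> nat) : nat :=
  \sum_(1 <= p < r.+1) \sum_(1 <= q < r.+1) ((p < q) && (f q < f p)).

Lemma stranspK u : involutive (stransp u).
Proof.
move=> x; rewrite /stransp; case: (eqVneq x u) => [->|ne_xu]; first by rewrite eqxx gtn_eqF.
case: (eqVneq x u.+1) => [->|ne_xu1]; first by rewrite eqxx.
by rewrite (negbTE ne_xu) (negbTE ne_xu1).
Qed.

Lemma stransp_range r u x : 0 < u < r -> (0 < stransp u x <= r) = (0 < x <= r).
Proof. by rewrite /stransp; case: ifP => [/eqP ->|_]; [|case: ifP => [/eqP ->|_]]; lia. Qed.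

Lemma sum_stransp r u (F : nat -> nat) : 0 < u < r ->
  \sum_(1 <= p < r.+1) F (stransp u p) = \sum_(1 <= p < r.+1) F p.
Proof.
move=> u_rng; rewrite -(big_map (stransp u) xpredT F); apply: perm_big.
apply: uniq_perm; rewrite ?map_inj_uniq ?iota_uniq //; first exact: (inv_inj (stranspK u)).
move=> x; rewrite -{1}(stranspK u x) (mem_map (inv_inj (stranspK u))) !mem_index_iota.
by rewrite !ltnS stransp_range.
Qed.

Lemma sum_nat_pick m n i (G : nat -> nat) :
  m <= i < n -> \sum_(m <= j < n) (j == i) * G j = G i.
Proof.
by move=> i_rng; under eq_bigr do rewrite mulnbl; rewrite -big_mkcond big_nat1_eq i_rng.
Qed.

Lemma sum_nat_pick2 r a b (F : nat -> nat -> nat) : 0 < a <= r -> 0 < b <= r ->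
  \sum_(1 <= p < r.+1) \sum_(1 <= q < r.+1) ((p == a) && (q == b)) * F p q = F a b.
Proof.
move=> a_rng b_rng.
have inner p : \sum_(1 <= q < r.+1) ((p == a) && (q == b)) * F p q = (p == a) * F p b.
  rewrite -(@sum_nat_pick 1 r.+1 b (F p)) ?ltnS // big_distrr.
  by apply: eq_bigr => q _ /=; rewrite mulnA mulnb.
by rewrite (eq_bigr _ (fun p _ => inner p)) sum_nat_pick ?ltnS.
Qed.

Lemma ltn_stransp u p q :
  (stransp u p < stransp u q) + ((p == u) && (q == u.+1)) =
  (p < q) + ((p == u.+1) && (q == u)).
Proof.
rewrite /stransp; case: (eqVneq p u) => ?; case: (eqVneq q u) => ?;
  case: (eqVneq p u.+1) => ?; case: (eqVneq q u.+1) => ? /=; lia.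
Qed.

Lemma inversions_stransp r f u : 0 < u < r ->
  inversions r (f \o stransp u) + (f u.+1 < f u) = inversions r f + (f u < f u.+1).
Proof.
move=> u_rng; have u_in : 0 < u <= r by lia.
have u1_in : 0 < u.+1 <= r by lia.
have reindex : inversions r (f \o stransp u) =
    \sum_(1 <= p < r.+1) \sum_(1 <= q < r.+1) ((stransp u p < stransp u q) && (f q < f p)).
  rewrite /inversions -(sum_stransp _ u_rng); apply: eq_bigr => p _.
  by rewrite -(sum_stransp _ u_rng); apply: eq_bigr => q _ /=; rewrite !stranspK.
rewrite reindex -(sum_nat_pick2 (fun p q => f q < f p) u_in u1_in).
rewrite -(sum_nat_pick2 (fun p q => f q < f p) u1_in u_in) /inversions -!big_split.
apply: eq_bigr => p _; rewrite -!big_split; apply: eq_bigr => q _ /=.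
by rewrite -!mulnb -!mulnDl !mulnb ltn_stransp.
Qed.

Lemma eq_inversions r f g : {in [pred x | 0 < x <= r], f =1 g} ->
  inversions r f = inversions r g.
Proof.
move=> eq_fg; apply: eq_big_nat => p p_rng; apply: eq_big_nat => q q_rng.
by rewrite !eq_fg // inE -ltnS.
Qed.

Lemma inversions_id r : inversions r id = 0.
Proof. by rewrite /inversions big1 // => p _; rewrite big1 // => q _; case: ltngtP. Qed.

Lemma sprod_range r us x :
  all (fun u => 0 < u < r) us -> 0 < x <= r -> 0 < sprod us x <= r.
Proof.
elim: us x => [//|u us IH] x /andP [u_rng us_rng] x_rng.
by apply: IH; rewrite ?stransp_range.
Qed.

Lemma inversions_sprod r us :
  all (fun u => 0 < u < r) us -> inversions r (sprod us) <= size us.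
Proof.
elim: us => [|u us IH]; first by rewrite (@eq_inversions _ _ id) ?inversions_id.
case/andP=> u_rng /IH le_us; rewrite (@eq_inversions _ _ (sprod us \o stransp u)) //.
by have := inversions_stransp (sprod us) u_rng; rewrite [size _]/=; lia.
Qed.

Section Relabelling.
Variables d n : nat.
Hypotheses (d_gt0 : 0 < d) (d_lt_n : d < n).
Local Notation N := (n - d).
Local Notation r := (d * (n - d)).

Definition relabelled (sg : nat -> nat) (C : seq (seq nat)) : Prop :=
  [/\ size C = r.+1, all (inI d n) C &
      forall t, 0 < t <= r -> exists s h, [/\ admissible d n s h,
        rootop d s h (cright d n (sg t).-1) = Some (cright d n (sg t)) &
        rootop d s h (nth [::] C t.-1) = Some (nth [::] C t)]].

Lemma relabelled_id : relabelled id (cright_chain d n).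
Proof.
have [allC _ _] := cright_chain_maxchain d_gt0 d_lt_n.
split=> [|//|j /andP [j_gt0 le_jr]]; first exact: size_cright_chain.
have lt_jr : j.-1 < r by rewrite prednK.
have [adm step] := cright_step d_gt0 d_lt_n lt_jr; rewrite prednK // in step.
exists (d - j.-1 %/ N + j.-1 %% N), (d - j.-1 %/ N).
by rewrite !nth_cright_chain // ltnW.
Qed.

Lemma relabelled_Fop sg C C' t : 0 < t < r ->
  (forall x, 0 < x <= r -> 0 < sg x <= r) -> relabelled sg C -> Fop d n t C = Some C' ->
  sg t < sg t.+1 /\ relabelled (sg \o stransp t) C'.
Proof.
move=> /andP [t_gt0 lt_tr] sg_rng [sizeC allC steps] FC.
have t_rng : 0 < t <= r by rewrite t_gt0 ltnW.
have t1_rng : 0 < t.+1 <= r by [].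
have [s1 [h1 [A1 Rc1 R1]]] := steps t t_rng.
have [s2 [h2 [A2 Rc2 R2]]] := steps t.+1 t1_rng.
have h_rng s h : admissible d n s h -> 0 < h <= d by case/and4P=> -> ->.
have Ib : inI d n (nth [::] C t.+1) by apply: (all_nthP [::] allC); rewrite sizeC.
have [lt_h [c' [-> Ic' R1' R2']]] := Fop_swap (h_rng _ _ A1) (h_rng _ _ A2) Ib R1 R2 FC.
split.
  rewrite ltnNge; apply/negP => le_sg.
  have : (sg t.+1).-1 %/ N <= (sg t).-1 %/ N by apply: leq_div2r; rewrite -!subn1 leq_sub2r.
  rewrite (cright_step_label d_gt0 d_lt_n (sg_rng _ t_rng) A1 Rc1) in lt_h.
  rewrite (cright_step_label d_gt0 d_lt_n (sg_rng _ t1_rng) A2 Rc2) in lt_h.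
  by move: (_ %/ N) (_ %/ N) lt_h => m1 m2; lia.
split=> [|| x x_rng].
- by rewrite size_set_nth sizeC; lia.
- apply/(all_nthP [::]) => i; rewrite size_set_nth nth_set_nth /=.
  by case: eqP => [_|_ lt_i] //; apply: (all_nthP [::] allC); move: lt_i; rewrite sizeC; lia.
rewrite !nth_set_nth /= /stransp.
have [->|ne_xt] := eqVneq x t.
  by rewrite ltn_eqF ?ltn_predL //; exists s2, h2.
have [->|ne_xt1] := eqVneq x t.+1; first by rewrite eqxx; exists s1, h1.
have ne_x1t : x.-1 != t by apply: contraNneq ne_xt1 => <-; rewrite prednK //; case/andP: x_rng.
by rewrite (negbTE ne_x1t); apply: steps.
Qed.

Lemma Fseq_relabelled ts C : all (fun t => 0 < t < r) ts ->
  Fseq d n ts (cright_chain d n) = Some C ->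
  relabelled (sprod ts) C /\ inversions r (sprod ts) = size ts.
Proof.
elim: ts C => [|t ts IH] C /=.
  by move=> _ [<-]; split; [apply: relabelled_id | apply: inversions_id].
case/andP=> t_rng ts_rng; case E: (Fseq d n ts _) => [C0|] //= FC.
have [rel0 inv0] := IH C0 ts_rng E.
have [lt_sg rel] := relabelled_Fop t_rng (fun x => sprod_range ts_rng) rel0 FC.
split=> //; have := inversions_stransp (sprod ts) t_rng.
by rewrite inv0 lt_sg ltnNge ltnW //= addn0 addn1 => <-.
Qed.

End Relabelling.

Theorem proposition2p27 (d n : nat) (ts : seq nat) (Cr C : seq (seq nat)) :
  0 < d -> d < n ->
  let r := d * (n - d) in
  all (fun t => 0 < t < r) ts ->
  is_Cright d n Cr ->
  Fseq d n ts Cr = Some C ->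
  is_maxchain d n C ->
  (* sigma_C = s_{t_k} ... s_{t_1}: for every t, the operator from i_{t-1}
     to i_t in C is tilde f_{sigma(t)}, the operator from i_{sigma(t)-1}
     to i_{sigma(t)} in C_right *)
  (forall t, 0 < t <= r ->
     exists s h, [/\ admissible d n s h,
       rootop d s h (nth [::] Cr (sprod ts t).-1) = Some (nth [::] Cr (sprod ts t)) &
       rootop d s h (nth [::] C t.-1) = Some (nth [::] C t)]) /\
  (* the expression is reduced: no shorter word in the s_u equals it in S_r *)
  (forall us : seq nat, all (fun u => 0 < u < r) us ->
     (forall x, 0 < x <= r -> sprod us x = sprod ts x) ->
     size ts <= size us).
Proof.
move=> d_gt0 d_lt_n r ts_rng /(Cright_eq d_gt0 d_lt_n) -> FC _.
have [[_ _ steps] inv_ts] := Fseq_relabelled d_gt0 d_lt_n ts_rng FC.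
split=> [t t_rng | us us_rng eq_us].
  have /andP [_ sg_le] := sprod_range ts_rng t_rng.
  rewrite (nth_cright_chain sg_le) (nth_cright_chain (leq_trans (leq_pred _) sg_le)).
  exact: steps.
by rewrite -inv_ts -(@eq_inversions _ (sprod us)) ?inversions_sprod.
Qed.
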